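(* Let $T$ be a minimal homeomorphism of a compact metric space $X$, let $G$ be a locally compact second countable group, and let $f\colon X\to G$ be a continuous regular cocycle. Let $C\subseteq X\times G$ be a surjective $\mathbf T_f$-orbit closure and $H=\mathrm{Stab}(C)$. Then for every point $(x,g)\in C$ whose $\mathbf T_f$-orbit is dense in $C$ we have $C_x=\{g'\in G:(x,g')\in C\}=gH$. Furthermore, the set $C/H=\{(x,gH):(x,g)\in C\}\subseteq X\times G/H$ is compact and $\mathbf T_f\colon C/H\to C/H$, $(x,gH)\mapsto(Tx,f(x)gH)$, is a minimal homeomorphism. In particular, for every $x\in X$ there exists a compact set $K_x\subseteq G$ with $C_x=K_xH$.
   Context: The cocycle is $f(n,x)=f(T^{n-1}x)\cdots f(x)$ for $n\ge1$, $f(0,x)=\mathbf 1_G$, $f(n,x)=f(-n,T^nx)^{-1}$ for $n<0$. The skew product is the homeomorphism $\mathbf T_f(x,g)=(Tx,f(x)g)$ of $X\times G$, so $\mathbf T_f^n(x,g)=(T^nx,f(n,x)g)$. A surjective $\mathbf T_f$-orbit closure is the closure of the $\mathbf T_f$-orbit $\{\mathbf T_f^n(x_0,g_0):n\in\mathbb Z\}$ of a single point which projects onto all of $X$ under the first coordinate projection; $f$ is called regular if such an orbit closure exists. For a closed set $C\subseteq X\times G$, $\mathrm{Stab}(C)=\{h\in G: R_h(C)=C\}$ where $R_h(x,g)=(x,gh^{-1})$; this is a closed subgroup. *)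

From HB Require Import structures.
From mathcomp Require Import all_boot all_order all_algebra.
From mathcomp Require Import all_classical all_reals all_analysis.
From mathcomp Require Import generic_quotient.

Set Implicit Arguments.
Unset Strict Implicit.
Unset Printing Implicit Defensive.

Import Order.TTheory GRing.Theory Num.Theory.
Local Open Scope classical_set_scope.
Local Open Scope quotient_scope.

Definition topological_group (G : topologicalType)
  (mul : G -> G -> G) (inv : G -> G) (one : G) : Prop :=
  [/\ (forall a b c, mul a (mul b c) = mul (mul a b) c),
      (forall a, mul one a = a /\ mul a one = a),
      (forall a, mul (inv a) a = one /\ mul a (inv a) = one),
      continuous (fun p : G * G => mul p.1 p.2) &
      continuous inv].

Definition lcsc_group (G : topologicalType)
  (mul : G -> G -> G) (inv : G -> G) (one : G) : Prop :=
  [/\ topological_group mul inv one, hausdorff_space G,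
      locally_compact [set: G] & @second_countable G].

Definition lcoset (G : Type) (mul : G -> G -> G) (g : G) (A : set G) : set G :=
  [set mul g a | a in A].
Definition setmul (G : Type) (mul : G -> G -> G) (K A : set G) : set G :=
  [set mul k a | k in K & a in A].

Definition iterZ (Y : Type) (F Finv : Y -> Y) (n : int) (y : Y) : Y :=
  match n with
  | Posz k => iter k F y
  | Negz k => iter k.+1 Finv y
  end.

Definition orbitZ (Y : Type) (F Finv : Y -> Y) (y : Y) : set Y :=
  [set iterZ F Finv n y | n in [set: int]].

Definition homeo_on (Y : topologicalType) (A : set Y) (F Finv : Y -> Y) : Prop :=
  [/\ F @` A `<=` A, Finv @` A `<=` A,
      {in A, cancel F Finv} & {in A, cancel Finv F}] /\
  ({within A, continuous F} /\ {within A, continuous Finv}).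

Definition minimal_on (Y : topologicalType) (A : set Y) (F Finv : Y -> Y) : Prop :=
  forall y, A y -> A `<=` closure (orbitZ F Finv y).

Definition minimal_homeo_on (Y : topologicalType) (A : set Y) (F : Y -> Y) : Prop :=
  exists Finv : Y -> Y, homeo_on A F Finv /\ minimal_on A F Finv.

Section Cocycle.
Variables (X G : Type) (mul : G -> G -> G) (inv : G -> G) (one : G).
Variables (T Tinv : X -> X) (f : X -> G).

Fixpoint cocycle_nat (k : nat) (x : X) : G :=
  match k with
  | 0 => one
  | k'.+1 => mul (f (iter k' T x)) (cocycle_nat k' x)
  end.

Definition cocycle (n : int) (x : X) : G :=
  match n with
  | Posz k => cocycle_nat k x
  | Negz k => inv (cocycle_nat k.+1 (iterZ T Tinv n x))
  end.

Definition skew_iter (n : int) (p : X * G) : X * G :=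
  (iterZ T Tinv n p.1, mul (cocycle n p.1) p.2).

Definition skew (p : X * G) : X * G := (T p.1, mul (f p.1) p.2).

Definition skew_orbit (p : X * G) : set (X * G) :=
  [set skew_iter n p | n in [set: int]].
End Cocycle.

Definition orbit_closure (X G : topologicalType) (mul : G -> G -> G)
  (inv : G -> G) (one : G) (T Tinv : X -> X) (f : X -> G) (p : X * G) :
  set (X * G) := closure (skew_orbit mul inv one T Tinv f p).

Definition surjective_orbit_closure (X G : topologicalType) (mul : G -> G -> G)
  (inv : G -> G) (one : G) (T Tinv : X -> X) (f : X -> G) (C : set (X * G)) :=
  (exists p, C = orbit_closure mul inv one T Tinv f p) /\ fst @` C = [set: X].

Definition regular_cocycle (X G : topologicalType) (mul : G -> G -> G)
  (inv : G -> G) (one : G) (T Tinv : X -> X) (f : X -> G) :=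
  exists C, surjective_orbit_closure mul inv one T Tinv f C.

Definition Stab (X G : Type) (mul : G -> G -> G) (inv : G -> G)
  (C : set (X * G)) : set G :=
  [set h | (fun p : X * G => (p.1, mul p.2 (inv h))) @` C = C].

(* a ~ b iff aH = bH (as sets); this is an equivalence relation for   *)
(* any H, and gives the left coset space G/H when H is a subgroup.    *)
Section CosetSpace.
Variables (G : topologicalType) (mul : G -> G -> G) (H : set G).

Definition coset_rel : rel G :=
  fun a b => `[< lcoset mul a H = lcoset mul b H >].

Lemma coset_rel_refl : reflexive coset_rel.
Proof. by move=> a; apply/asboolP. Qed.
Lemma coset_rel_sym : symmetric coset_rel.
Proof. by move=> a b; apply/idP/idP => /asboolP e; apply/asboolP. Qed.
Lemma coset_rel_trans : transitive coset_rel.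
Proof.
by move=> b a c /asboolP e1 /asboolP e2; apply/asboolP; rewrite e1.
Qed.

Definition coset_equiv : equiv_rel G :=
  EquivRel coset_rel coset_rel_refl coset_rel_sym coset_rel_trans.

Definition coset_space : Type :=
  quotient_topology [the quotType G of {eq_quot coset_equiv}].
End CosetSpace.

Definition coset_proj (G : topologicalType) (mul : G -> G -> G) (H : set G)
  (g : G) : coset_space mul H := \pi_(coset_space mul H) g.

Definition quot_set (X G : topologicalType) (mul : G -> G -> G) (H : set G)
  (C : set (X * G)) : set (X * coset_space mul H) :=
  [set (p.1, coset_proj mul H p.2) | p in C].

Definition skew_quot (X G : topologicalType) (mul : G -> G -> G) (H : set G)
  (T : X -> X) (f : X -> G) (q : X * coset_space mul H) :
  X * coset_space mul H :=
  (T q.1, coset_proj mul H (mul (f q.1) (repr q.2))).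

Arguments coset_space {G} mul H.
Arguments coset_proj {G} mul H g.
Arguments quot_set {X G} mul H C _.
Arguments skew_quot {X G} mul H T f q.

From Pilot Require Import Defs.
From HB Require Import structures.
From mathcomp Require Import all_boot all_order all_algebra.
From mathcomp Require Import all_classical all_reals all_analysis.
From mathcomp Require Import generic_quotient zify.

Set Implicit Arguments.
Unset Strict Implicit.
Unset Printing Implicit Defensive.
Import GRing.Theory.
Local Open Scope classical_set_scope.

(** The key tool is a Baire category argument: since [X] is compact and [G] is
    locally compact and second countable, every closed [M ⊆ X × G] has a point
    [x] at which the fibres [M_y] vary lower semicontinuously.  Approximating
    such a fibre of [C] by orbit points of the base point shows that the closed
    semigroup of right translations preserving [C] is a group, namely
    [H = Stab(C)]; if [(x, g)] has a dense orbit, every [g'] in [C_x] then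
    satisfies [g^-1 g' ∈ H], so [C_x = gH].  Lower semicontinuity at one point,
    minimality of [T] and compactness of [X] give a compact [K ⊆ G] meeting
    every fibre of [C]; hence [C_x = (K ∩ C_x) H] and [C/H] is the continuous
    image of the compact set [C ∩ (X × K)].  Finally, the closure of the
    [H]-saturated orbit of any point of [C] is closed, invariant and meets every
    fibre, so at one of its lower semicontinuity points it is seen to contain
    the base point: every orbit of the induced map on [C/H] is dense. *)

(** * Topological preliminaries *)

Lemma fst_continuous (U V : topologicalType) : continuous (@fst U V).
Proof. by move=> p; exact: cvg_fst. Qed.

Lemma snd_continuous (U V : topologicalType) : continuous (@snd U V).
Proof. by move=> p; exact: cvg_snd. Qed.

Lemma pair_continuous (S U V : topologicalType) (a : S -> U) (b : S -> V) :
  continuous a -> continuous b -> continuous (fun s => (a s, b s)).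
Proof. by move=> ca cb s; apply: cvg_pair; [exact: ca|exact: cb]. Qed.

Lemma comp_continuous (S U V : topologicalType) (a : S -> U) (b : U -> V) :
  continuous a -> continuous b -> continuous (b \o a).
Proof. by move=> ca cb s; apply: continuous_comp; [exact: ca|exact: cb]. Qed.

Lemma closure_sub_preimage (S U : topologicalType) (F : S -> U) A B :
  continuous F -> closed B -> A `<=` F @^-1` B -> closure A `<=` F @^-1` B.
Proof.
move=> cF cB AB; rewrite [X in _ `<=` X](closure_id _).1; first exact: closureS.
by apply: preimage_closed => // s _; exact: cF.
Qed.

Lemma interior_setD_interior (S : topologicalType) (A : set S) :
  (A `\` A°)° = set0.
Proof.
apply/seteqP; split => // s iAs; have [_] := interior_subset iAs; apply.
by move: iAs; rewrite /interior => /filterS; apply => y [].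
Qed.

Lemma compact_seq_subcover (S : topologicalType) (I : eqType) (U : I -> set S) :
  compact [set: S] -> (forall i, open (U i)) -> (forall s, exists i, U i s) ->
  exists r : seq I, forall s, exists2 i, i \in r & U i s.
Proof.
move=> cS oU coverU.
pose F := filter_from [set: seq I]
  (fun r0 => [set r : seq I | {subset r0 <= r}]).
have FF : Filter F.
  apply: filter_from_filter; first by exists [::].
  move=> r1 r2 _ _; exists (r1 ++ r2) => // r r12r.
  by split => i ri; apply: r12r; rewrite mem_cat ri ?orbT.
have near_s s : [set: S] s ->
    \forall s' \near s & r \near F, exists2 i, i \in r & U i s'.
  move=> _; have [i Uis] := coverU s.
  exists (U i, [set r : seq I | {subset [:: i] <= r}]).
    by split => /=; [exact: open_nbhs_nbhs (conj (oU i) Uis)|exists [:: i]].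
  by move=> [s' r] /= [Uis' ir]; exists i => //; apply: ir; rewrite inE.
have [r _ rcover] := (compact_near_coveringP _).1 cS _ F _ FF near_s.
by exists r => s; exact: (rcover r).
Qed.

Lemma regular_closure_nbhs (S : topologicalType) (s : S) (V : set S) :
  {for s, regular_space S} -> nbhs s V ->
  exists W, [/\ open W, W s & closure W `<=` V].
Proof.
move=> rs /rs[W Ws WV]; exists W°; split; first exact: open_interior.
  exact: nbhs_singleton (nbhs_interior Ws).
by move=> y /(closureS (@interior_subset _ W)) /WV.
Qed.

Lemma compact_Baire (S : topologicalType) (N : nat -> set S) :
  hausdorff_space S -> compact [set: S] -> [set: S] !=set0 ->
  (forall n, closed (N n)) -> (forall n, (N n)° = set0) ->
  exists s, forall n, ~ N n s.
Proof.
move=> hS cS [s0 _] cN iN.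
have rS (s : S) : {for s, regular_space S}.
  by apply: (compact_regular hS cS); exact: filterT.
have shrink (nO : nat * set S) : exists W : set S,
    open nO.2 /\ nO.2 !=set0 ->
    [/\ open W, W !=set0 & closure W `<=` nO.2 `\` N nO.1].
  case: nO => n O /=.
  have [[oO [s Os]]|] := pselect (open O /\ O !=set0); last first.
    by move=> h; exists set0 => /h.
  have [y [Oy Ny]] : exists y, O y /\ ~ N n y.
    apply: contrapT => allN.
    have : O `<=` (N n)°.
      rewrite -open_subsetE // => z Oz; apply: contrapT => Nz.
      by apply: allN; exists z.
    by rewrite iN => /(_ s Os).
  have oD : open (O `\` N n) by apply: openI => //; exact: closed_openC.
  have [W [oW Wy sW]] := regular_closure_nbhs (rS y)
    (open_nbhs_nbhs (conj oD (conj Oy Ny))).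
  by exists W => _; split => //; exists y.
have [next hnext] := choice shrink.
pose W := fix W n := if n is m.+1 then next (n, W m) else next (0%N, [set: S]).
have hW n : [/\ open (W n), W n !=set0 &
    closure (W n) `<=` (if n is m.+1 then W m else [set: S]) `\` N n].
  elim: n => [|n [oW nW _]]; last exact: (hnext (n.+1, W n)).
  by apply: (hnext (0%N, _)); split; [exact: openT|exists s0].
have Wdec n m : (m <= n)%N -> W n `<=` W m.
  elim: n => [|n IH]; first by rewrite leqn0 => /eqP ->.
  rewrite leq_eqVlt => /orP[/eqP ->//|]; rewrite ltnS => /IH sub.
  have [_ _ cW] := hW n.+1.
  by move=> z /(@subset_closure _ (W n.+1)) /cW [/sub].
pose F := filter_from [set: nat] W.
have FF : ProperFilter F.
  apply: filter_from_proper; last by move=> i _; have [] := hW i.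
  apply: filter_from_filter; first by exists 0%N.
  move=> i j _ _; exists (maxn i j) => // z Wz.
  by split; apply: (Wdec (maxn i j)) => //; [exact: leq_maxl|exact: leq_maxr].
have [s [_ clFs]] := cS F FF filterT.
exists s => n Nns; have [_ _ cW] := hW n.
have : closure (W n) s by move=> B Bs; apply: clFs => //; exists n.
by move=> /cW [].
Qed.

Lemma compact_Baire_countable (S : topologicalType) (I : Type) (D : set I)
    (N : I -> set S) :
  hausdorff_space S -> compact [set: S] -> [set: S] !=set0 -> countable D ->
  (forall i, D i -> closed (N i)) -> (forall i, D i -> (N i)° = set0) ->
  exists s, forall i, D i -> ~ N i s.
Proof.
move=> hS cS neS /countable_injP[h hinj] cN iN.
pose Nn n := [set s | exists i, [/\ D i, h i = n & N i s]].
have NnE n : (exists2 i, D i & Nn n = N i) \/ Nn n = set0.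
  have [[i [Di hi]]|no] := pselect (exists i, D i /\ h i = n); last first.
    by right; apply/seteqP; split => // s [i [Di hi _]]; apply: no; exists i.
  left; exists i => //; apply/seteqP; split => [s [j [Dj hj Njs]]|s Nis].
    suff -> : i = j by [].
    by apply: hinj; rewrite ?inE // hi hj.
  by exists i.
have [s hs] : exists s, forall n, ~ Nn n s.
  apply: compact_Baire => // n; case: (NnE n) => [[i Di ->]|->].
  - exact: cN.
  - exact: closed0.
  - exact: iN.
  - by apply/seteqP; split => // y /interior_subset.
by exists s => i Di Nis; apply: (hs (h i)); exists i.
Qed.

Lemma closed_proj_compact (S U : topologicalType) (K : set U)
    (M : set (S * U)) :
  compact K -> closed M -> closed [set s | exists2 k, K k & M (s, k)].
Proof.
move=> cK cM; rewrite -openC openE => s notMs.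
have near_k k : K k -> \forall k' \near k & y \near nbhs s, ~ M (y, k').
  move=> Kk; have : nbhs (s, k) (~` M).
    apply: open_nbhs_nbhs; split; first exact: closed_openC.
    by move=> Msk; apply: notMs; exists k.
  case=> [[A B]] /= [As Bk] sub.
  by exists (B, A) => //= -[k' y] /= [Bk' Ay]; exact: (sub (y, k')).
have := (compact_near_coveringP K).1 cK S (nbhs s) _ (nbhs_filter s) near_k.
by apply: filterS => y noM [k Kk Myk]; exact: (noM k Kk).
Qed.

Lemma locally_compactT_nbhs (U : topologicalType) (u : U) :
  locally_compact [set: U] -> exists2 P, nbhs u P & compact P.
Proof.
move=> /(_ u I)[P uP [cP _]]; exists P => //.
by move: uP; rewrite /within /= => /filterS; apply => z; apply.
Qed.

Lemma basis_compact_closure (U : topologicalType) (B : set (set U)) :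
  hausdorff_space U -> locally_compact [set: U] -> basis B ->
  forall u V, nbhs u V ->
  exists b, [/\ B b, b u, compact (closure b) & closure b `<=` V].
Proof.
move=> hU lcU [_ bB] u V uV.
have [P Pu cP] := locally_compactT_nbhs u lcU.
have [W [oW Wu sW]] := regular_closure_nbhs (compact_regular hU cP Pu)
  (filterI uV Pu).
have [b [Bb bu] bW] := bB u W (open_nbhs_nbhs (conj oW Wu)).
have sb : closure b `<=` V `&` P by move=> z /(closureS bW) /sW.
exists b; split => //; last by move=> z /sb [].
by apply: (subclosed_compact _ cP); [exact: closed_closure|move=> z /sb []].
Qed.

Definition fibre_lsc_at (S U : topologicalType) (M : set (S * U)) (s : S) :=
  forall u, M (s, u) -> forall B, nbhs u B ->
  \forall y \near s, exists2 c, B c & M (y, c).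

Lemma exists_fibre_lsc_at (S U : topologicalType) (M : set (S * U)) :
  hausdorff_space S -> compact [set: S] -> [set: S] !=set0 ->
  hausdorff_space U -> locally_compact [set: U] -> @second_countable U ->
  closed M -> exists s, fibre_lsc_at M s.
Proof.
move=> hS cS neS hU lcU [B cB bB] cM.
pose D b := B b /\ compact (closure b).
pose L b := [set s | exists2 k, closure b k & M (s, k)].
have cL b : D b -> closed (L b) by move=> [_ cb]; exact: closed_proj_compact.
have [s hs] : exists s, forall b, D b -> ~ (L b `\` (L b)°) s.
  apply: compact_Baire_countable => //.
  - by apply: sub_countable cB; apply: subset_card_le => b [].
  - move=> b Db; apply: closedI; first exact: cL.
    exact: open_closedC (@open_interior _ _).
  - by move=> b _; exact: interior_setD_interior.
exists s => u Msu V uV.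
have [b [Bb bu cb bV]] := basis_compact_closure hU lcU bB uV.
have Lbs : L b s by exists u => //; exact: subset_closure.
have : (L b)° s by apply: contrapT => nLbs; apply: (hs b).
by apply: filterS => y [k bk Myk]; exists k => //; exact: bV.
Qed.

(** * Integer iterates *)

Section IntegerIterates.
Local Open Scope ring_scope.
Variables (Y : Type) (F Finv : Y -> Y).
Hypotheses (FK : cancel F Finv) (FKinv : cancel Finv F).

Lemma iterZ_add1 (n : int) y : iterZ F Finv (n + 1) y = F (iterZ F Finv n y).
Proof.
case: n => [k|[|k]].
- by have -> : Posz k + 1 = Posz k.+1 by lia.
- by rewrite /= FKinv.
- have -> : Negz k.+1 + 1 = Negz k by rewrite !NegzE; lia.
  by rewrite /= FKinv.
Qed.

Lemma iterZ_sub1 (n : int) y : iterZ F Finv (n - 1) y = Finv (iterZ F Finv n y).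
Proof. by rewrite -[in RHS](subrK 1 n) iterZ_add1 FK. Qed.

Lemma iterZD (m n : int) y :
  iterZ F Finv (m + n) y = iterZ F Finv m (iterZ F Finv n y).
Proof.
elim/int_rect: m => [|k IH|k IH]; first by rewrite add0r.
  have -> : k.+1%:Z + n = (k%:Z + n) + 1 by lia.
  by rewrite iterZ_add1 IH.
have -> : - k.+1%:Z = - k%:Z - 1 by lia.
by rewrite addrAC !iterZ_sub1 IH.
Qed.

Lemma iterZNK (m : int) y : iterZ F Finv (- m) (iterZ F Finv m y) = y.
Proof. by rewrite -iterZD addNr. Qed.

End IntegerIterates.

Lemma iterZ_semiconj (Y Z : Type) (F Finv : Y -> Y) (F' Finv' : Z -> Z)
    (h : Y -> Z) :
  (forall y, F' (h y) = h (F y)) -> (forall y, Finv' (h y) = h (Finv y)) ->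
  forall n y, iterZ F' Finv' n (h y) = h (iterZ F Finv n y).
Proof.
move=> hF hFinv [k|k] y /=.
  by elim: k => //= k ->; rewrite hF.
by elim: k => /= [|k ->]; rewrite hFinv.
Qed.

Lemma iterZ_continuous (Y : topologicalType) (F Finv : Y -> Y) (n : int) :
  continuous F -> continuous Finv -> continuous (iterZ F Finv n).
Proof.
have iter_cont (E : Y -> Y) k : continuous E -> continuous (iter k E).
  move=> cE; elim: k => [|k IH] /=; first by move=> y; exact: cvg_id.
  exact: (comp_continuous IH cE).
by move=> cF cFinv; case: n => k /=; exact: iter_cont.
Qed.

(** * Topological groups and coset spaces *)

Section TopologicalGroup.
Variables (G : topologicalType) (mul : G -> G -> G) (inv : G -> G) (one : G).
Hypothesis tgG : topological_group mul inv one.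

Lemma grp_mulA a b c : mul a (mul b c) = mul (mul a b) c.
Proof. by case: tgG. Qed.

Lemma grp_mul1g a : mul one a = a. Proof. by case: tgG => _ /(_ a)[]. Qed.
Lemma grp_mulg1 a : mul a one = a. Proof. by case: tgG => _ /(_ a)[]. Qed.
Lemma grp_mulVg a : mul (inv a) a = one.
Proof. by case: tgG => _ _ /(_ a)[]. Qed.
Lemma grp_mulgV a : mul a (inv a) = one.
Proof. by case: tgG => _ _ /(_ a)[]. Qed.

Lemma grp_mulKg a b : mul (inv a) (mul a b) = b.
Proof. by rewrite grp_mulA grp_mulVg grp_mul1g. Qed.

Lemma grp_mulKVg a b : mul a (mul (inv a) b) = b.
Proof. by rewrite grp_mulA grp_mulgV grp_mul1g. Qed.

Lemma grp_mulgK a b : mul (mul b a) (inv a) = b.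
Proof. by rewrite -grp_mulA grp_mulgV grp_mulg1. Qed.

Lemma grp_mulgKV a b : mul (mul b (inv a)) a = b.
Proof. by rewrite -grp_mulA grp_mulVg grp_mulg1. Qed.

Lemma grp_invgK a : inv (inv a) = a.
Proof. by rewrite -[RHS](grp_mulKg (inv a)) grp_mulVg grp_mulg1. Qed.

Lemma grp_invMg a b : inv (mul a b) = mul (inv b) (inv a).
Proof.
have ab_inv : mul (mul a b) (mul (inv b) (inv a)) = one.
  by rewrite grp_mulA grp_mulgK grp_mulgV.
by rewrite -[RHS](grp_mulKg (mul a b)) ab_inv grp_mulg1.
Qed.

Lemma grp_invg1 : inv one = one.
Proof. by rewrite -[LHS]grp_mul1g grp_mulgV. Qed.

Lemma grp_inv_continuous : continuous inv.
Proof. by case: tgG. Qed.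

Lemma grp_mul_continuous (S : topologicalType) (a b : S -> G) :
  continuous a -> continuous b -> continuous (fun s => mul (a s) (b s)).
Proof.
case: tgG => _ _ _ cmul _ ca cb.
exact: (comp_continuous (pair_continuous ca cb) cmul).
Qed.

Definition is_subgroup (H : set G) :=
  [/\ H one, forall h, H h -> H (inv h) &
      forall a b, H a -> H b -> H (mul a b)].

Section CosetSpace.
Local Open Scope quotient_scope.
Variable H : set G.
Hypothesis sH : is_subgroup H.
Let H1 : H one. Proof. by case: sH. Qed.
Let HV h : H h -> H (inv h). Proof. by case: sH => _ + _; apply. Qed.
Let HM a b : H a -> H b -> H (mul a b). Proof. by case: sH => _ _; apply. Qed.
Local Notation pi := (coset_proj mul H).

Lemma coset_projP a b : pi a = pi b <-> H (mul (inv a) b).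
Proof.
have -> : (pi a = pi b) = (a = b %[mod {eq_quot coset_equiv mul H}]) by [].
split => [/eqquotP/asboolP e|Hab].
  have : lcoset mul b H b by exists one; [exact: H1|exact: grp_mulg1].
  by rewrite -e => -[h Hh <-]; rewrite grp_mulKg.
apply/eqquotP/asboolP; apply/seteqP; split => _ [h Hh <-].
  exists (mul (inv (mul (inv a) b)) h); first exact/HM/Hh/HV.
  by rewrite grp_invMg grp_invgK grp_mulA grp_mulKVg.
by exists (mul (mul (inv a) b) h); [exact: HM|rewrite grp_mulA grp_mulKVg].
Qed.

Lemma coset_projMr c a : H a -> pi (mul c a) = pi c.
Proof.
move=> Ha; apply/coset_projP.
by rewrite grp_invMg -grp_mulA grp_mulVg grp_mulg1; exact: HV.
Qed.

Lemma coset_proj_repr a g : pi (mul a (repr (pi g))) = pi (mul a g).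
Proof.
apply/coset_projP; rewrite grp_invMg -grp_mulA grp_mulKg.
by apply/coset_projP; rewrite /coset_proj reprK.
Qed.

Lemma coset_proj_open (V : set G) : open V -> open (pi @` V).
Proof.
move=> oV; suff : open (pi @^-1` (pi @` V)) by [].
have -> : pi @^-1` (pi @` V) = \bigcup_(a in H) ((mul^~ (inv a)) @^-1` V).
  apply/seteqP; split => g.
    case=> v Vv /coset_projP Hvg; exists (mul (inv v) g) => //=.
    by rewrite grp_invMg grp_invgK grp_mulKVg.
  case=> a Ha /= Va; exists (mul g (inv a)) => //.
  by rewrite coset_projMr //; exact: HV.
apply: bigcup_open => a _; apply: (open_comp _ oV) => g _.
by apply: grp_mul_continuous => // y; [exact: cvg_id|exact: cvg_cst].
Qed.

Lemma coset_lift_continuous (X Z : topologicalType)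
    (F : X * coset_space mul H -> Z) :
  continuous (fun p : X * G => F (p.1, pi p.2)) -> continuous F.
Proof.
move=> cF [x w] N; have -> : w = pi (repr w) by rewrite /coset_proj reprK.
move=> NF.
have [[U V] /= [Ux Vw] UVN] := cF (x, repr w) N NF.
exists (U, pi @` V°).
  split => //; apply: open_nbhs_nbhs; split.
    exact/coset_proj_open/open_interior.
  by exists (repr w) => //; exact: nbhs_singleton (nbhs_interior Vw).
move=> [y _] /= [Uy [v Vv <-]].
exact: (UVN (y, v) (conj Uy (interior_subset Vv))).
Qed.

End CosetSpace.

(** * Skew products *)

Section SkewProduct.
Variables (X : topologicalType) (T Tinv : X -> X) (f : X -> G).
Hypotheses (TK : cancel T Tinv) (TKinv : cancel Tinv T).
Hypotheses (contT : continuous T) (contTinv : continuous Tinv)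
  (contf : continuous f).

Local Notation cocycle_nat := (cocycle_nat mul one T f).
Local Notation skew := (Defs.skew mul T f).
Local Notation Tf := (skew_iter mul inv one T Tinv f).
Local Notation orbit := (skew_orbit mul inv one T Tinv f).

Definition skew_inv (p : X * G) : X * G :=
  (Tinv p.1, mul (inv (f (Tinv p.1))) p.2).

Lemma skewK : cancel skew skew_inv.
Proof. by case=> x g; rewrite /skew_inv /= TK grp_mulKg. Qed.

Lemma skew_invK : cancel skew_inv skew.
Proof. by case=> x g; rewrite /skew_inv /skew /= TKinv grp_mulKVg. Qed.

Lemma cocycle_natSr k x : cocycle_nat k.+1 x = mul (cocycle_nat k (T x)) (f x).
Proof.
elim: k x => [|k IH] x; first by rewrite /= grp_mulg1 grp_mul1g.
rewrite -[LHS]/(mul (f (iter k.+1 T x)) (cocycle_nat k.+1 x)).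
by rewrite IH grp_mulA iterSr.
Qed.

Lemma iter_skew k x g :
  iter k skew (x, g) = (iter k T x, mul (cocycle_nat k x) g).
Proof.
elim: k => [|k IH] /=; first by rewrite grp_mul1g.
by rewrite IH /skew /= grp_mulA.
Qed.

Lemma iter_skew_inv k x g : iter k.+1 skew_inv (x, g) =
  (iter k.+1 Tinv x, mul (inv (cocycle_nat k.+1 (iter k.+1 Tinv x))) g).
Proof.
elim: k => [|k IH]; first by rewrite /= /skew_inv /= grp_mulg1.
rewrite iterS IH; set y := iter k.+1 Tinv x.
rewrite -[iter k.+2 Tinv x]/(Tinv y) (cocycle_natSr k.+1 (Tinv y)) TKinv.
by rewrite grp_invMg /skew_inv /= grp_mulA.
Qed.

Lemma skew_iterE n p : Tf n p = iterZ skew skew_inv n p.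
Proof.
by case: p => x g; case: n => k; rewrite /iterZ ?iter_skew ?iter_skew_inv.
Qed.

Lemma skew_iterD m n p : Tf (m + n)%R p = Tf m (Tf n p).
Proof. by rewrite !skew_iterE iterZD //; [exact: skewK|exact: skew_invK]. Qed.

Lemma skew_iterNK m p : Tf (- m)%R (Tf m p) = p.
Proof. by rewrite -skew_iterD addNr skew_iterE. Qed.

Definition rtrans (a : G) (p : X * G) : X * G := (p.1, mul p.2 a).

Lemma skew_iter_rtrans n a p : Tf n (rtrans a p) = rtrans a (Tf n p).
Proof. by rewrite /skew_iter /rtrans /= grp_mulA. Qed.

Lemma skew_orbit_iter n p : orbit (Tf n p) = orbit p.
Proof.
apply/seteqP; split => _ [m _ <-].
  by exists (m + n)%R; rewrite ?skew_iterD.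
by exists (m - n)%R => //; rewrite -skew_iterD subrK.
Qed.

Lemma rtrans_continuous a : continuous (rtrans a).
Proof.
apply: pair_continuous; first exact: fst_continuous.
by apply: grp_mul_continuous; [exact: snd_continuous|move=> p; exact: cvg_cst].
Qed.

Lemma skew_iter_continuous n : continuous (Tf n).
Proof.
have -> : Tf n = iterZ skew skew_inv n by apply: funext => p; exact: skew_iterE.
have cfst := @fst_continuous X G.
apply: iterZ_continuous; apply: pair_continuous.
- exact: comp_continuous cfst contT.
- exact: grp_mul_continuous (comp_continuous cfst contf) (@snd_continuous X G).
- exact: comp_continuous cfst contTinv.
- apply: grp_mul_continuous (@snd_continuous X G).
  exact: comp_continuous (comp_continuous (comp_continuous cfst contTinv) contf)
    grp_inv_continuous.
Qed.

Lemma closure_orbit_skew_iter p n q :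
  closure (orbit p) q -> closure (orbit p) (Tf n q).
Proof.
move=> orb_q.
have orbit_sub : orbit p `<=` Tf n @^-1` closure (orbit p).
  move=> _ [m _ <-]; apply: subset_closure.
  by exists (n + m)%R; rewrite ?skew_iterD.
exact: (closure_sub_preimage (@skew_iter_continuous n) (@closed_closure _ _)
  orbit_sub orb_q).
Qed.

Definition right_stable (C : set (X * G)) (k : G) :=
  forall p, C p -> C (rtrans k p).

Lemma StabP (C : set (X * G)) h :
  Stab mul inv C h <-> right_stable C (inv h) /\ right_stable C h.
Proof.
split => [CE|[CV Ch]].
  split => [p Cp|p]; first by rewrite -CE; exists p.
  rewrite -{1}CE => -[q Cq <-].
  by rewrite /rtrans /= grp_mulgKV -surjective_pairing.
apply/seteqP; split => [_ [p Cp <-]|p Cp]; first exact: CV.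
exists (rtrans h p); first exact: Ch.
by rewrite /rtrans /= grp_mulgK -surjective_pairing.
Qed.

Lemma right_stable1 (C : set (X * G)) : right_stable C one.
Proof. by move=> p; rewrite /rtrans grp_mulg1 -surjective_pairing. Qed.

Lemma right_stableM (C : set (X * G)) a b :
  right_stable C a -> right_stable C b -> right_stable C (mul a b).
Proof. by move=> Ca Cb p /Ca /Cb; rewrite /rtrans /= grp_mulA. Qed.

Lemma Stab_subgroup (C : set (X * G)) : is_subgroup (Stab mul inv C).
Proof.
split => [|h /StabP[CV Ch]|a b /StabP[CaV Ca] /StabP[CbV Cb]]; apply/StabP.
- by rewrite grp_invg1; split; exact: right_stable1.
- by rewrite grp_invgK.
- by rewrite grp_invMg; split; exact: right_stableM.
Qed.

Lemma closed_right_stable (C : set (X * G)) :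
  closed C -> closed (right_stable C).
Proof.
move=> cC; have -> : right_stable C = \bigcap_(p in C) (rtrans^~ p @^-1` C).
  by apply/seteqP; split => k Ck p Cp; exact: Ck.
apply: closed_bigI => p _; apply: (continuous_closedP _).1 cC.
apply: pair_continuous => [k|]; first exact: cvg_cst.
by apply: grp_mul_continuous => k; [exact: cvg_cst|exact: cvg_id].
Qed.

Lemma closed_Stab (C : set (X * G)) : closed C -> closed (Stab mul inv C).
Proof.
move=> cC.
have -> : Stab mul inv C = inv @^-1` right_stable C `&` right_stable C.
  by apply/seteqP; split => h /StabP.
apply: closedI; last exact: closed_right_stable.
exact: (continuous_closedP _).1 grp_inv_continuous _ (closed_right_stable cC).
Qed.

Lemma lsc_fibre_transport (M : set (X * G)) x0 g0 x g g' :
  closed M -> (forall n p, M p -> M (Tf n p)) -> fibre_lsc_at M x ->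
  closure (orbit (x0, g0)) (x, g) -> M (x, g') ->
  M (x0, mul g0 (mul (inv g) g')).
Proof.
move=> cM invM lscM orb_xg Mxg'.
have cM0 : closed [set c | M (x0, c)].
  apply: (continuous_closedP _).1 cM.
  by apply: pair_continuous => c; [exact: cvg_cst|exact: cvg_id].
pose th (q : G * G) := mul g0 (mul (inv q.1) q.2).
have cth : continuous th.
  apply: grp_mul_continuous => [q|]; first exact: cvg_cst.
  apply: grp_mul_continuous (@snd_continuous G G).
  exact: comp_continuous (@fst_continuous G G) grp_inv_continuous.
apply: cM0 => W /(cth (g, g')) [[A B] /= [Ag Bg'] ABW].
(* Take an orbit point [(y, u) = T_f^m (x0, g0)] near [(x, g)] and [c] near
   [g'] with [(y, c)] in [M]: [T_f^-m (y, c)] is [(x0, g0)] translated by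
   [u^-1 c]. *)
have near_x : nbhs (x, g) [set p | (exists2 c, B c & M (p.1, c)) /\ A p.2].
  exists ([set y | exists2 c, B c & M (y, c)], A) => //.
  by split => //; exact: lscM Mxg' _ Bg'.
have [_ [[m _ <-] [[c Bc Mc] Au]]] := orb_xg _ near_x.
set q := Tf m (x0, g0) in Mc Au *.
exists (th (q.2, c)); split; last exact: (ABW (q.2, c)).
have := invM (- m)%R _ Mc.
have -> : (q.1, c) = rtrans (mul (inv q.2) c) q by rewrite /rtrans grp_mulKVg.
by rewrite skew_iter_rtrans skew_iterNK.
Qed.

Section SkewQuotient.
Variable H : set G.
Hypothesis sH : is_subgroup H.
Local Notation pi := (coset_proj mul H).
Local Notation skew_quot := (skew_quot mul H T f).

Definition proj_coset (p : X * G) : X * coset_space mul H := (p.1, pi p.2).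

Definition skew_quot_inv (q : X * coset_space mul H) : X * coset_space mul H :=
  (Tinv q.1, pi (mul (inv (f (Tinv q.1))) (repr q.2))).

Lemma proj_coset_repr q : q = proj_coset (q.1, repr q.2).
Proof. by case: q => x w; rewrite /proj_coset /coset_proj reprK. Qed.

Lemma skew_quot_proj p : skew_quot (proj_coset p) = proj_coset (skew p).
Proof. by rewrite /Defs.skew_quot /= coset_proj_repr. Qed.

Lemma skew_quot_inv_proj p :
  skew_quot_inv (proj_coset p) = proj_coset (skew_inv p).
Proof. by rewrite /skew_quot_inv /= coset_proj_repr. Qed.

Lemma iterZ_skew_quot n p :
  iterZ skew_quot skew_quot_inv n (proj_coset p) = proj_coset (Tf n p).
Proof.
rewrite skew_iterE; apply: iterZ_semiconj => y.
  exact: skew_quot_proj.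
exact: skew_quot_inv_proj.
Qed.

Lemma skew_quotK : cancel skew_quot skew_quot_inv.
Proof.
by move=> q; rewrite [q in skew_quot q]proj_coset_repr skew_quot_proj
  skew_quot_inv_proj skewK -proj_coset_repr.
Qed.

Lemma skew_quot_invK : cancel skew_quot_inv skew_quot.
Proof.
by move=> q; rewrite [q in skew_quot_inv q]proj_coset_repr skew_quot_inv_proj
  skew_quot_proj skew_invK -proj_coset_repr.
Qed.

Lemma proj_coset_continuous : continuous proj_coset.
Proof.
apply: pair_continuous; first exact: fst_continuous.
exact: comp_continuous (@snd_continuous X G) pi_continuous.
Qed.

Lemma skew_quot_continuous : continuous skew_quot.
Proof.
apply: coset_lift_continuous => //.
have -> : (fun p : X * G => skew_quot (p.1, pi p.2)) = proj_coset \o Tf 1.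
  by apply: funext => p; rewrite /= skew_iterE; exact: skew_quot_proj.
exact: comp_continuous (@skew_iter_continuous _) proj_coset_continuous.
Qed.

Lemma skew_quot_inv_continuous : continuous skew_quot_inv.
Proof.
apply: coset_lift_continuous => //.
have -> : (fun p : X * G => skew_quot_inv (p.1, pi p.2)) =
    proj_coset \o Tf (-1)%R.
  by apply: funext => p; rewrite /= skew_iterE; exact: skew_quot_inv_proj.
exact: comp_continuous (@skew_iter_continuous _) proj_coset_continuous.
Qed.

Lemma homeo_on_skew_quot (C : set (X * G)) :
  (forall n p, C p -> C (Tf n p)) ->
  homeo_on (quot_set mul H C) skew_quot skew_quot_inv.
Proof.
move=> C_SI; split; split.
- move=> _ [_ [p Cp <-] <-]; exists (Tf 1 p); first exact: C_SI.
  by rewrite skew_iterE; exact: esym (skew_quot_proj p).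
- move=> _ [_ [p Cp <-] <-]; exists (Tf (-1)%R p); first exact: C_SI.
  by rewrite skew_iterE; exact: esym (skew_quot_inv_proj p).
- by move=> q _; exact: skew_quotK.
- by move=> q _; exact: skew_quot_invK.
- exact: continuous_subspaceT skew_quot_continuous.
- exact: continuous_subspaceT skew_quot_inv_continuous.
Qed.

End SkewQuotient.

(** * Surjective orbit closures *)

Section OrbitClosure.
Variables (x0 : X) (g0 : G).
Hypotheses (hX : hausdorff_space X) (cX : compact [set: X])
  (minT : minimal_on [set: X] T Tinv).
Hypotheses (hG : hausdorff_space G) (lcG : locally_compact [set: G])
  (scG : @second_countable G).
Local Notation C := (orbit_closure mul inv one T Tinv f (x0, g0)).
Local Notation H := (Stab mul inv C).
Hypothesis C_fibre : forall x, exists g, C (x, g).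

Let closed_C : closed C. Proof. exact: closed_closure. Qed.

Let C_skew_iter n p : C p -> C (Tf n p).
Proof. exact: closure_orbit_skew_iter. Qed.

Let sH : is_subgroup H. Proof. exact: Stab_subgroup. Qed.

Let exists_lsc_point (M : set (X * G)) : closed M -> exists x, fibre_lsc_at M x.
Proof. by apply: exists_fibre_lsc_at => //; exists x0. Qed.

Lemma right_stable_of_dense x g k :
  C `<=` closure (orbit (x, g)) -> C (x, mul g k) -> right_stable C k.
Proof.
move=> dense Cxgk p /dense orb_p.
apply: (closure_sub_preimage (@rtrans_continuous k) closed_C _ orb_p).
move=> _ [n _ <-]; rewrite /preimage /= -skew_iter_rtrans.
exact: C_skew_iter.
Qed.

Lemma right_stableV k : right_stable C k -> right_stable C (inv k).
Proof.
move=> Ck; have [x lsc_x] := exists_lsc_point closed_C.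
have [u Cxu] := C_fibre x.
have Cxuk : C (x, mul u k) := Ck _ Cxu.
have := lsc_fibre_transport closed_C C_skew_iter lsc_x Cxuk Cxu.
rewrite grp_invMg -grp_mulA grp_mulVg grp_mulg1 => Cx0.
exact: right_stable_of_dense (fun p Cp => Cp) Cx0.
Qed.

Lemma Stab_of_dense x g g' :
  C `<=` closure (orbit (x, g)) -> C (x, g') -> H (mul (inv g) g').
Proof.
move=> dense Cxg'; have Ck : right_stable C (mul (inv g) g').
  by apply: right_stable_of_dense dense _; rewrite grp_mulKVg.
by apply/StabP; split => //; exact: right_stableV.
Qed.

Lemma fibre_dense_point x g : C (x, g) -> C `<=` closure (orbit (x, g)) ->
  [set g' | C (x, g')] = lcoset mul g H.
Proof.
move=> Cxg dense; apply/seteqP; split => [g' Cxg'|_ [h /StabP[_ Ch] <-]].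
  exists (mul (inv g) g'); first exact: Stab_of_dense dense Cxg'.
  exact: grp_mulKVg.
exact: (Ch _ Cxg).
Qed.

Lemma exists_compact_transversal :
  exists2 K : set G, compact K & forall x, exists2 k, K k & C (x, k).
Proof.
have [x lsc_x] := exists_lsc_point closed_C.
have [g Cxg] := C_fibre x.
have [P Pg cP] := locally_compactT_nbhs g lcG.
pose U := [set y | exists2 c, P c & C (y, c)]°.
have Ux : U x by exact: nbhs_singleton (nbhs_interior (lsc_x g Cxg P Pg)).
have [r coverr] : exists r : seq int,
    forall y, exists2 n, n \in r & U (iterZ T Tinv n y).
  apply: (compact_seq_subcover (U := fun n => iterZ T Tinv n @^-1` U))
    => // [n|y].
    apply: open_comp (@open_interior _ _) => y _; exact: iterZ_continuous.
  have Unbhs : nbhs x U by exact: open_nbhs_nbhs (conj (@open_interior _ _) Ux).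
  have [_ [[n _ <-] Un]] := @minT y I x I U Unbhs.
  by exists n.
pose Kn n := [set (Tf (- n)%R q).2 | q in [set: X] `*` P].
exists (\bigcup_(n in [set` r]) Kn n) => [|y].
  rewrite bigcup_seq; apply: bigsetU_compact => n _.
  apply: continuous_compact; last exact: compact_setX.
  apply: continuous_subspaceT.
  exact: comp_continuous (@skew_iter_continuous _) (@snd_continuous X G).
have [n rn /interior_subset [c Pc Cc]] := coverr y.
set z := iterZ T Tinv n y in Cc.
exists (Tf (- n)%R (z, c)).2; first by exists n => //; exists (z, c).
have -> : y = (Tf (- n)%R (z, c)).1 by rewrite /= iterZNK.
by rewrite -surjective_pairing; exact: C_skew_iter.
Qed.

Section Transversal.
Variable K : set G.
Hypotheses (cK : compact K) (K_meets : forall x, exists2 k, K k & C (x, k)).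

Lemma coset_meets_transversal x g :
  C (x, g) -> exists2 k, K k & C (x, k) /\ H (mul (inv g) k).
Proof.
(* The points [(x, g)] such that [gH] meets [K ∩ C_x] form a closed set, as
   [K] is compact, containing the orbit points of [(x0, g0)], whose orbits are
   dense. *)
pose M := [set pk : (X * G) * G |
  C (pk.1.1, pk.2) /\ H (mul (inv pk.1.2) pk.2)].
have cM : closed M.
  have cfst := @fst_continuous (X * G)%type G.
  have csnd := @snd_continuous (X * G)%type G.
  have cC : continuous (fun pk : (X * G) * G => (pk.1.1, pk.2)).
    exact: pair_continuous (comp_continuous cfst (@fst_continuous X G)) csnd.
  have cH : continuous (fun pk : (X * G) * G => mul (inv pk.1.2) pk.2).
    apply: grp_mul_continuous csnd.
    apply: comp_continuous grp_inv_continuous.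
    exact: comp_continuous cfst (@snd_continuous X G).
  apply: closedI; first exact: (continuous_closedP _).1 cC _ closed_C.
  exact: (continuous_closedP _).1 cH _ (closed_Stab closed_C).
move=> Cxg; have cZ := closed_proj_compact cK cM.
apply: (cZ (x, g)); move: Cxg; apply: closureS.
move=> _ [n _ <-]; set q := Tf n (x0, g0).
have [k Kk Cqk] := K_meets q.1.
exists k => //; split => //; apply: Stab_of_dense Cqk.
by rewrite -surjective_pairing /q skew_orbit_iter.
Qed.

Lemma closure_Stab_orbit q :
  C q -> C `<=` closure [set rtrans a (Tf n q) | a in H & n in [set: int]].
Proof.
move=> Cq; set A := [set rtrans a (Tf n q) | a in H & n in [set: int]].
have cclA : closed (closure A) by exact: closed_closure.
have AC : A `<=` C.
  by move=> _ [a /StabP[_ Ca] [n _ <-]]; apply/Ca/C_skew_iter.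
have clA_C : closure A `<=` C by move=> p /(closureS AC); apply: closed_C.
have clA_iter n p : closure A p -> closure A (Tf n p).
  move=> clAp.
  apply: (closure_sub_preimage (@skew_iter_continuous n) cclA _ clAp).
  move=> _ [a Ha [m _ <-]]; apply: subset_closure; exists a => //.
  by exists (n + m)%R => //; rewrite skew_iter_rtrans skew_iterD.
have clA_fibre y : exists c, closure A (y, c).
  suff [k _ clAk] : exists2 k, K k & closure A (y, k) by exists k.
  have cY := closed_proj_compact cK cclA.
  apply: (cY y); apply: (closureS _ (@minT q.1 I y I)) => _ [n _ <-].
  have := @C_skew_iter n q Cq; case E : (Tf n q) => [y' c] Cyc.
  have [k Kk [Ck Hk]] := coset_meets_transversal Cyc.
  have -> : iterZ T Tinv n q.1 = y' by rewrite -[y']/((y', c).1) -E.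
  exists k => //; apply: subset_closure; exists (mul (inv c) k) => //.
  by exists n => //; rewrite E /rtrans /= grp_mulKVg.
have [x lsc_x] := exists_lsc_point cclA.
have [g clAxg] := clA_fibre x.
have := lsc_fibre_transport cclA clA_iter lsc_x (clA_C _ clAxg) clAxg.
rewrite grp_mulVg grp_mulg1 => clA_base.
move=> p Cp; apply: cclA; move: Cp; apply: closureS => _ [n _ <-].
exact: clA_iter clA_base.
Qed.

End Transversal.

Lemma compact_quot_set : compact (quot_set mul H C).
Proof.
have [K cK K_meets] := exists_compact_transversal.
have -> : quot_set mul H C = proj_coset H @` ([set: X] `*` K `&` C).
  apply/seteqP; split => [_ [[x g] Cxg <-]|_ [p [_ Cp] <-]]; last by exists p.
  have [k Kk [Cxk Hk]] := coset_meets_transversal cK K_meets Cxg.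
  exists (x, k) => //; rewrite /proj_coset /=; congr pair.
  exact/esym/(coset_projP sH).
apply: continuous_compact.
  exact/continuous_subspaceT/proj_coset_continuous.
by apply: compact_closedI => //; exact: compact_setX.
Qed.

Lemma minimal_on_quot_set :
  minimal_on (quot_set mul H C) (skew_quot mul H T f) (@skew_quot_inv H).
Proof.
move=> _ [q Cq <-] _ [r Cr <-].
have [K cK K_meets] := exists_compact_transversal.
have orbit_sub : [set rtrans a (Tf n q) | a in H & n in [set: int]] `<=`
    proj_coset H @^-1` closure (orbitZ (skew_quot mul H T f) (@skew_quot_inv H)
      (proj_coset H q)).
  move=> _ [a Ha [n _ <-]]; apply: subset_closure; exists n => //.
  rewrite (iterZ_skew_quot sH) /proj_coset; congr pair.
  exact: esym (coset_projMr sH _ Ha).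
exact: (closure_sub_preimage (@proj_coset_continuous H) (@closed_closure _ _)
  orbit_sub (closure_Stab_orbit cK K_meets Cq Cr)).
Qed.

Lemma minimal_homeo_on_quot_set :
  minimal_homeo_on (quot_set mul H C) (skew_quot mul H T f).
Proof.
exists (@skew_quot_inv H); split; last exact: minimal_on_quot_set.
by apply: (homeo_on_skew_quot sH (C := C)) => n p; exact: C_skew_iter.
Qed.

Lemma fibre_compact_Stab x :
  exists K, compact K /\ [set g | C (x, g)] = setmul mul K H.
Proof.
have [K cK K_meets] := exists_compact_transversal.
exists (K `&` [set k | C (x, k)]); split.
  apply: compact_closedI cK _; apply: (continuous_closedP _).1 closed_C.
  by apply: pair_continuous => k; [exact: cvg_cst|exact: cvg_id].
apply/seteqP; split => [g Cxg|_ [k [Kk Cxk] [h /StabP[_ Ch] <-]]]; last first.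
  exact: Ch _ Cxk.
have [k Kk [Cxk Hk]] := coset_meets_transversal cK K_meets Cxg.
have [_ HV _] := sH.
exists k => //; exists (inv (mul (inv g) k)); first exact: HV.
by rewrite grp_invMg grp_invgK grp_mulKVg.
Qed.

End OrbitClosure.
End SkewProduct.
End TopologicalGroup.

Theorem theorem2p1 (R : realType) (X : metricType R) (G : topologicalType)
  (mul : G -> G -> G) (inv : G -> G) (one : G)
  (T Tinv : X -> X) (f : X -> G) (C : set (X * G)) :
  (* X compact metric, T a minimal homeomorphism with inverse Tinv *)
  compact [set: X] ->
  homeo_on [set: X] T Tinv -> minimal_on [set: X] T Tinv ->
  (* G a locally compact second countable group *)
  lcsc_group mul inv one ->
  (* f a continuous regular cocycle *)
  continuous f ->
  regular_cocycle mul inv one T Tinv f ->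
  (* C a surjective T_f-orbit closure *)
  surjective_orbit_closure mul inv one T Tinv f C ->
  let H := Stab mul inv C in
  [/\ (forall x g, C (x, g) ->
         C `<=` orbit_closure mul inv one T Tinv f (x, g) ->
         [set g' | C (x, g')] = lcoset mul g H),
      compact (quot_set mul H C),
      minimal_homeo_on (quot_set mul H C) (skew_quot mul H T f) &
      (forall x, exists K : set G,
         compact K /\ [set g' | C (x, g')] = setmul mul K H)].
Proof.
(* Regularity of [f] is implied by the existence of [C]. *)
move=> cX [[_ _ TK TKinv] [cT cTinv]] minT [tgG hG lcG scG] cf _.
move=> [[[x0 g0] ->] projC] H; rewrite {}/H.
have {}TK : cancel T Tinv by move=> x; apply: TK; rewrite in_setT.
have {}TKinv : cancel Tinv T by move=> x; apply: TKinv; rewrite in_setT.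
have {}cT : continuous T by exact/continuous_subspace_setT.
have {}cTinv : continuous Tinv by exact/continuous_subspace_setT.
have hX : hausdorff_space X := @metric_hausdorff R X.
have C_fibre x : exists g, orbit_closure mul inv one T Tinv f (x0, g0) (x, g).
  have : (fst @` orbit_closure mul inv one T Tinv f (x0, g0)) x.
    by rewrite projC.
  by case=> -[y g] Cyg /= <-; exists g.
split.
- by move=> x g Cxg; apply: fibre_dense_point.
- exact: compact_quot_set.
- exact: minimal_homeo_on_quot_set.
- exact: fibre_compact_Stab.
Qed.
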